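(* Let $L\mathfrak{g}^{\sigma^*}$, $\widetilde G$ and its coadjoint action $\mathrm{Ad}^*_{\widetilde G}$ be as in the context. For integers $m\ge 0$ and $p\ge1$ let $$\widetilde{\mathfrak g}^*_{(m,p)}=\Big\{X\in L\mathfrak{g}^{\sigma^*}\ :\ X(z)=\sum_{j=-m}^{p}X_jz^j\Big\}.$$ Then $\widetilde{\mathfrak g}^*_{(m,p)}$ is invariant under $\mathrm{Ad}^*_{\widetilde G}(g)$ for every $g\in\widetilde G$.
   Context: $LG$ is the group of smooth loops $g:S^1\to GL(n,\mathbb{C})$ with $\overline{g(z)}=g(\bar z)$; $LG^{\Sigma}=\{g\in LG: g(z)g(-z)^T=I\}$. $LG^{\Sigma}_+$ (resp. $LG^{\Sigma}_-$) is the subgroup of loops in $LG^{\Sigma}$ extending analytically (as invertible matrices) to the interior (resp. exterior) of the unit circle, with the extra requirement $g(\infty)=I$ for $LG^{\Sigma}_-$. $\widetilde G=\{g\in LG^{\Sigma}: g=g_+g_-^{-1},\ g_+\in LG^{\Sigma}_+,\ g_-\in LG^{\Sigma}_-\}$; the factors $g_\pm$ are unique. $L\mathfrak{g}^{\sigma^*}$ is the space of loops $X(z)=\sum_jX_jz^j$ with real $n\times n$ coefficients, $X_{2j}$ symmetric and $X_{2j+1}$ skew-symmetric. $\Pi_+$ (resp. $\Pi_-$) is the projection $\sum_jX_jz^j\mapsto\sum_{j\ge0}X_jz^j$ (resp. $\sum_{j<0}X_jz^j$). The coadjoint action of $g=g_+g_-^{-1}\in\widetilde G$ on $A\in L\mathfrak{g}^{\sigma^*}$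 is $\mathrm{Ad}^*_{\widetilde G}(g)A=\Pi_-(g_+^{-1}Ag_+)+\Pi_+(g_-^{-1}Ag_-)$. *)

From HB Require Import structures.
From mathcomp Require Import all_boot all_order all_algebra.
From mathcomp Require Import all_classical all_reals all_analysis.
Set Implicit Arguments. Unset Strict Implicit. Unset Printing Implicit Defensive.
Import Order.TTheory GRing.Theory Num.Theory.
Local Open Scope ring_scope.

(* A loop z |-> X(z) = sum_j X_j z^j on S^1 is represented by its Fourier
   coefficients j |-> X_j.  The reality condition conj(g z) = g(conj z) of LG
   (and the reality of the coefficients of Lg^{sigma*}) means exactly that the
   coefficients are real matrices. *)
Definition loop (R : realType) (n : nat) := int -> 'M[R]_n.

(* smoothness of the loop = rapid decay of the Fourier coefficients *)
Definition smooth_loop (R : realType) (n : nat) (X : loop R n) : Prop :=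
  forall k : nat, exists C : R, forall (j : int) (a b : 'I_n),
    `|(j%:~R : R)| ^+ k * `|X j a b| <= C.

Definition sumZ (R : realType) (u : int -> R) : R :=
  limn (fun N : nat => \sum_(0 <= l < N.*2.+1) u (l%:Z - N%:Z)).

(* pointwise product of loops = convolution of the coefficients *)
Definition lmul (R : realType) (n : nat) (X Y : loop R n) : loop R n :=
  fun k => \matrix_(a, b) sumZ (fun l => (X l *m Y (k - l)) a b).

Definition lone (R : realType) (n : nat) : loop R n :=
  fun k => if k == 0 then 1%:M else 0.

(* z |-> g(-z)^T *)
Definition lsigma (R : realType) (n : nat) (g : loop R n) : loop R n :=
  fun j => ((-1 : R) ^ j) *: (g j)^T.

Definition is_linv (R : realType) (n : nat) (g h : loop R n) : Prop :=
  smooth_loop h /\ lmul g h = lone R n /\ lmul h g = lone R n.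

(* LG : smooth loops into GL(n,C) with conj(g z) = g(conj z) *)
Definition LG (R : realType) (n : nat) (g : loop R n) : Prop :=
  smooth_loop g /\ exists h, is_linv g h.

Definition LGSigma (R : realType) (n : nat) (g : loop R n) : Prop :=
  LG g /\ lmul g (lsigma g) = lone R n.

(* LG^Sigma_+ : extends holomorphically, as invertible matrices, to |z| < 1 *)
Definition LGSigma_plus (R : realType) (n : nat) (g : loop R n) : Prop :=
  LGSigma g /\ (forall j : int, j < 0 -> g j = 0) /\
  exists h, is_linv g h /\ (forall j : int, j < 0 -> h j = 0).

(* LG^Sigma_- : extends holomorphically, as invertible matrices, to |z| > 1,
   with g(oo) = I *)
Definition LGSigma_minus (R : realType) (n : nat) (g : loop R n) : Prop :=
  LGSigma g /\ (forall j : int, 0 < j -> g j = 0) /\ g 0 = 1%:M /\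
  exists h, is_linv g h /\ (forall j : int, 0 < j -> h j = 0).

(* L g^{sigma*} : real coefficients, X_{2j} symmetric, X_{2j+1} skew *)
Definition Lgsigma_star (R : realType) (n : nat) (X : loop R n) : Prop :=
  smooth_loop X /\ forall j : int, (X j)^T = ((-1 : R) ^ j) *: X j.

Definition gstar_mp (R : realType) (n m p : nat) (X : loop R n) : Prop :=
  Lgsigma_star X /\ forall j : int, (j < - (m%:Z)) || (p%:Z < j) -> X j = 0.

(* Ad^*(g) A = Pi_-(g_+^{-1} A g_+) + Pi_+(g_-^{-1} A g_-), where
   g = g_+ g_-^{-1}, gpi = g_+^{-1}, gmi = g_-^{-1} *)
Definition Ad_star (R : realType) (n : nat) (gp gpi gm gmi A : loop R n)
  : loop R n :=
  fun k => if k < 0 then lmul (lmul gpi A) gp k else lmul (lmul gmi A) gm k.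

From HB Require Import structures.
From mathcomp Require Import all_boot all_order all_algebra.
From mathcomp Require Import all_classical all_reals all_analysis.
From mathcomp Require Import zify ring lra.
Import Order.TTheory GRing.Theory Num.Theory numFieldNormedType.Exports.
Local Open Scope ring_scope.
Set Implicit Arguments. Unset Strict Implicit. Unset Printing Implicit Defensive.

(* Write lsigma X for the loop z |-> X(-z)^T.  The conditions on A say exactly
   that lsigma A = A, the condition g(z) g(-z)^T = I says that lsigma g is a right
   inverse of g, and lsigma reverses products (lsigma (X Y) = lsigma Y lsigma X)
   as long as the convolutions involved are finite sums.  Since g_+ has no
   negative Fourier modes, its inverse g_+^{-1} equals lsigma g_+; this is the
   only analytic step, as reassociating g_+^{-1} g_+ lsigma g_+ involves an
   infinite convolution and needs the rapid decay of the coefficients of g_+^{-1}.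
   Then g_+^{-1} A g_+ has no modes below -m, all its convolutions are finite, and
   lsigma (lsigma g_+ A g_+) = lsigma g_+ A g_+, so its negative part lies in
   g^*_(m,p).  The g_- half is the same argument after z |-> 1/z. *)

Section PartialSums.
Variable V : zmodType.
Implicit Types (u : int -> V) (K : nat).

Definition psumZ K u : V := \sum_(0 <= i < K.*2.+1) u (i%:Z - K%:Z).

Definition supp_in K u := forall j : int, (K < absz j)%N -> u j = 0.

Lemma sum_window u (a a' : int) (len len' : nat) :
  (forall j, (j < a) || (a + len%:Z <= j) -> u j = 0) ->
  a' <= a -> a + len%:Z <= a' + len'%:Z ->
  \sum_(0 <= i < len') u (a' + i%:Z) = \sum_(0 <= i < len) u (a + i%:Z).
Proof.
move=> u0 le_a'a le_end.
have [d da] : exists d : nat, a = a' + d%:Z by exists (absz (a - a')); lia.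
have zero_out m m' :
    (forall i, (m <= i < m')%N -> (a' + i%:Z < a) || (a + len%:Z <= a' + i%:Z)) ->
    \sum_(m <= i < m') u (a' + i%:Z) = 0.
  by move=> out; rewrite big_nat_cond big1 // => i /andP[/out/u0 ->].
rewrite (@big_cat_nat _ _ _ d) ?(@big_cat_nat _ _ _ (d + len) d len') /=; try lia.
rewrite (zero_out 0%N d) ?(zero_out (d + len)%N len') ?add0r ?addr0;
  [|by move=> i; lia..].
rewrite -{1}[d]add0n big_addn addKn; apply: eq_bigr => i _; congr u; lia.
Qed.

Lemma psumZE K u : psumZ K u = \sum_(0 <= i < K.*2.+1) u (- K%:Z + i%:Z).
Proof. by apply: eq_bigr => i _; rewrite addrC. Qed.

Lemma psumZ_shift K K' u (l : int) : supp_in K u -> (K + absz l <= K')%N ->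
  psumZ K' (fun j => u (j - l)) = psumZ K u.
Proof.
move=> uK le_K'; rewrite !psumZE.
transitivity (\sum_(0 <= i < K'.*2.+1) u ((- K'%:Z - l) + i%:Z)).
  by apply: eq_bigr => i _; congr u; lia.
by apply: sum_window; [move=> j hj; apply: uK; lia|lia|lia].
Qed.

Lemma psumZ_supp K K' u : supp_in K u -> (K <= K')%N -> psumZ K' u = psumZ K u.
Proof.
move=> uK le_K'; rewrite -(@psumZ_shift K K' u 0 uK) ?addn0 //.
by apply: eq_bigr => i _; rewrite subr0.
Qed.

Lemma psumZ_single K u (k : int) : (absz k <= K)%N ->
  (forall j, j != k -> u j = 0) -> psumZ K u = u k.
Proof.
move=> le_k u0; rewrite psumZE (@sum_window _ k _ 1%N).
- by rewrite big_nat1 addr0.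
- by move=> j hj; apply: u0; lia.
- lia.
- lia.
Qed.

Lemma psumZ_reflect K u : psumZ K (fun j => u (- j)) = psumZ K u.
Proof.
by rewrite /psumZ big_nat_rev; apply: eq_big_nat => i /andP[_ hi]; congr u; lia.
Qed.

Lemma psumZS K u : psumZ K.+1 u = u (- K.+1%:Z) + psumZ K u + u K.+1%:Z.
Proof.
rewrite /psumZ doubleS big_nat_recl // big_nat_recr //= addrA.
by congr (u _ + _ + u _); [lia|apply: eq_bigr => i _; congr u; lia|lia].
Qed.

End PartialSums.

Section MatrixSums.
Variables (R : realType) (n : nat).
Implicit Types (u : int -> R) (U V : int -> 'M[R]_n).

Definition lsum U : 'M[R]_n := \matrix_(a, b) sumZ (fun l => U l a b).

Definition fin_supp U := exists K, supp_in K U.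

Lemma lmulE (X Y : loop R n) k : lmul X Y k = lsum (fun l => X l *m Y (k - l)).
Proof. by []. Qed.

Lemma sumZE K u : supp_in K u -> sumZ u = psumZ K u.
Proof.
move=> uK; apply: lim_near_cst => //; near=> N.
apply: psumZ_supp uK _; near: N; exact: nbhs_infty_ge.
Unshelve. all: by end_near.
Qed.

Lemma lsumE K U : supp_in K U -> lsum U = psumZ K U.
Proof.
move=> UK; apply/matrixP => a b; rewrite mxE /psumZ summxE (@sumZE K) //.
by move=> j /UK ->; rewrite mxE.
Qed.

Lemma lsum_reflect U : lsum (fun j => U (- j)) = lsum U.
Proof.
apply/matrixP => a b; rewrite !mxE.
have E : (fun N => psumZ N (fun l => U (- l) a b)) = (fun N => psumZ N (fun l => U l a b)).
  by apply: funext => N; exact: (psumZ_reflect N (fun l => U l a b)).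
exact: (congr1 (fun s => limn s) E).
Qed.

Lemma fin_supp_sub U V : fin_supp U -> (forall j, U j = 0 -> V j = 0) -> fin_supp V.
Proof. by move=> [K UK] UV; exists K => j /UK /UV. Qed.

Lemma lsum_shift U (l : int) : fin_supp U -> lsum (fun j => U (j - l)) = lsum U.
Proof.
move=> [K UK]; rewrite (lsumE UK) (@lsumE (K + absz l)) ?(psumZ_shift UK) //.
by move=> j hj; apply: UK; lia.
Qed.

Lemma lsum_reflect_shift U (k : int) : fin_supp U -> lsum (fun j => U (k - j)) = lsum U.
Proof.
move=> [K UK]; rewrite -(lsum_reflect (fun j => U (k - j))) -[RHS](@lsum_shift _ (- k)).
  by congr lsum; apply: funext => j; congr U; lia.
by exists K.
Qed.

Lemma lsum_single U (k : int) : (forall j, j != k -> U j = 0) -> lsum U = U k.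
Proof.
move=> U0; rewrite (@lsumE (absz k)) ?(psumZ_single (leqnn _) U0) //.
by move=> j hj; apply: U0; apply: contraTneq hj => ->; rewrite ltnn.
Qed.

Lemma lsum_eq0 U : (forall j, U j = 0) -> lsum U = 0.
Proof. by move=> U0; rewrite (lsum_single (k := 0)). Qed.

Lemma trmx_lsum U : (lsum U)^T = lsum (fun j => (U j)^T).
Proof.
apply/matrixP => a b; rewrite !mxE; congr sumZ; apply: funext => l; by rewrite mxE.
Qed.

Lemma lsumZ (c : R) U : fin_supp U -> lsum (fun j => c *: U j) = c *: lsum U.
Proof.
move=> [K UK]; rewrite (lsumE UK) (@lsumE K) ?scaler_sumr // => j /UK ->.
by rewrite scaler0.
Qed.

Lemma lsum_mulmxl U (B : 'M[R]_n) : fin_supp U -> lsum U *m B = lsum (fun j => U j *m B).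
Proof.
move=> [K UK]; rewrite (lsumE UK) (@lsumE K) ?mulmx_suml // => j /UK ->.
by rewrite mul0mx.
Qed.

Lemma lsum_mulmxr U (B : 'M[R]_n) : fin_supp U -> B *m lsum U = lsum (fun j => B *m U j).
Proof.
move=> [K UK]; rewrite (lsumE UK) (@lsumE K) ?mulmx_sumr // => j /UK ->.
by rewrite mulmx0.
Qed.

Lemma lsumB U V : fin_supp U -> fin_supp V -> lsum U - lsum V = lsum (fun j => U j - V j).
Proof.
move=> [K UK] [K' VK]; have le_K := leq_maxl K K'; have le_K' := leq_maxr K K'.
rewrite (lsumE UK) (lsumE VK) -(psumZ_supp UK le_K) -(psumZ_supp VK le_K').
rewrite (@lsumE (maxn K K')) ?/psumZ ?sumrB // => j hj.
by rewrite UK ?VK ?subr0 //; lia.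
Qed.

Lemma lsum_exchange (F : int -> int -> 'M[R]_n) :
  (exists K, forall l i, (K < absz l)%N || (K < absz i)%N -> F l i = 0) ->
  lsum (fun l => lsum (F l)) = lsum (fun i => lsum (fun l => F l i)).
Proof.
move=> [K FK].
have inner l : supp_in K (F l) by move=> i hi; rewrite FK ?hi ?orbT.
have inner' i : supp_in K (fun l => F l i) by move=> l hl; rewrite FK ?hl.
rewrite (@lsumE K (fun l => lsum (F l))); last first.
  by move=> l hl; rewrite (lsumE (inner l)) /psumZ big1 // => i _; rewrite FK ?hl.
rewrite (@lsumE K (fun i => lsum (fun l => F l i))); last first.
  by move=> i hi; rewrite (lsumE (inner' i)) /psumZ big1 // => l _; rewrite FK ?hi ?orbT.
rewrite /psumZ; under eq_bigr => l _ do rewrite (lsumE (inner _)).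
under [RHS]eq_bigr => i _ do rewrite (lsumE (inner' _)).
exact: exchange_big.
Qed.

End MatrixSums.

Section Signs.
Variable R : numDomainType.

Lemma signzD (x y : int) : (-1 : R) ^ (x + y) = (-1) ^ x * (-1) ^ y.
Proof. by rewrite exprzDr // unitrN1. Qed.

Lemma signzN (j : int) : (-1 : R) ^ (- j) = (-1) ^ j.
Proof. by rewrite !expN1r abszN. Qed.

Lemma signzMK (j : int) : (-1 : R) ^ j * (-1) ^ j = 1.
Proof. by rewrite -{1}signzN -signzD addNr expr0z. Qed.

Lemma normr_signz (j : int) : `|(-1 : R) ^ j| = 1.
Proof. by rewrite expN1r normrX normrN1 expr1n. Qed.

End Signs.

Section LoopAlgebra.
Variables (R : realType) (n : nat).
Implicit Types (X Y Z A Q : loop R n) (U V : int -> 'M[R]_n).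

Definition supp_ge (a : int) X := forall j, j < a -> X j = 0.

Lemma fin_supp_conv (a b k : int) X Y : supp_ge a X -> supp_ge b Y ->
  fin_supp (fun l => X l *m Y (k - l)).
Proof.
move=> Xa Yb; exists (absz a + absz (k - b))%N => l hl.
have [la|la] := ltP l a; first by rewrite Xa ?mul0mx.
by rewrite Yb ?mulmx0 //; lia.
Qed.

Lemma supp_ge_lmul (a b : int) X Y :
  supp_ge a X -> supp_ge b Y -> supp_ge (a + b) (lmul X Y).
Proof.
move=> Xa Yb k hk; rewrite lmulE lsum_eq0 // => l.
have [la|la] := ltP l a; first by rewrite Xa ?mul0mx.
by rewrite Yb ?mulmx0 //; lia.
Qed.

Lemma supp_ge_lone : supp_ge 0 (lone R n).
Proof. by move=> j j0; rewrite /lone lt_eqF. Qed.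

Lemma lmul1l X : lmul (lone R n) X = X.
Proof.
apply: funext => k; rewrite lmulE (@lsum_single _ _ _ 0) /lone ?eqxx ?mul1mx ?subr0 //.
by move=> j /negPf ->; rewrite mul0mx.
Qed.

Lemma lmul1r X : lmul X (lone R n) = X.
Proof.
apply: funext => k; rewrite lmulE (@lsum_single _ _ _ k) /lone ?subrr ?eqxx ?mulmx1 //.
by move=> j; rewrite subr_eq0 eq_sym => /negPf ->; rewrite mulmx0.
Qed.

Lemma lmulA (a b c : int) X Y Z : supp_ge a X -> supp_ge b Y -> supp_ge c Z ->
  lmul (lmul X Y) Z = lmul X (lmul Y Z).
Proof.
move=> Xa Yb Zc; apply: funext => k; rewrite !lmulE.
transitivity (lsum (fun l => lsum (fun i => X i *m Y (l - i) *m Z (k - l)))).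
  congr lsum; apply: funext => l.
  by rewrite lmulE lsum_mulmxl //; exact: fin_supp_conv Xa Yb.
rewrite lsum_exchange; last first.
  exists (absz a + absz b + absz c + absz k)%N => l i hli.
  have [ia|ia] := ltP i a; first by rewrite Xa ?mul0mx.
  have [lib|lib] := ltP (l - i) b; first by rewrite Yb ?mulmx0 ?mul0mx.
  by rewrite Zc ?mulmx0 //; lia.
congr lsum; apply: funext => i; rewrite lmulE.
rewrite -(@lsum_shift _ _ _ i (fin_supp_conv (k - i) Yb Zc)).
have -> : (fun l => Y (l - i) *m Z (k - i - (l - i))) = (fun l => Y (l - i) *m Z (k - l)).
  by apply: funext => l; congr (_ *m Z _); lia.
rewrite lsum_mulmxr; last by apply: (@fin_supp_conv (b + i)) Zc => l hl; apply: Yb; lia.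
by congr lsum; apply: funext => l; rewrite mulmxA.
Qed.

Lemma supp_ge_lsigma (a : int) X : supp_ge a X -> supp_ge a (lsigma X).
Proof. by move=> Xa j ja; rewrite /lsigma Xa // trmx0 scaler0. Qed.

Lemma lsigmaK X : lsigma (lsigma X) = X.
Proof.
by apply: funext => j; rewrite /lsigma linearZ /= trmxK scalerA signzMK scale1r.
Qed.

Lemma lsigma_fixedP X : lsigma X = X <-> forall j, (X j)^T = (-1) ^ j *: X j.
Proof.
split=> [sX j|symX]; last first.
  by apply: funext => j; rewrite /lsigma symX scalerA signzMK scale1r.
by rewrite -{2}sX /lsigma scalerA signzMK scale1r.
Qed.

Lemma lsigma_lmul (a b : int) X Y : supp_ge a X -> supp_ge b Y ->
  lsigma (lmul X Y) = lmul (lsigma Y) (lsigma X).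
Proof.
move=> Xa Yb; apply: funext => k; rewrite lmulE.
rewrite -(lsum_reflect_shift k (fin_supp_conv k (supp_ge_lsigma Yb) (supp_ge_lsigma Xa))).
rewrite /lsigma lmulE trmx_lsum -lsumZ; last first.
  by apply: (fin_supp_sub (fin_supp_conv k Xa Yb)) => j ->; rewrite trmx0.
congr lsum; apply: funext => j.
rewrite trmx_mul -scalemxAl -scalemxAr scalerA -signzD (_ : k - (k - j) = j) ?subrK //.
by lia.
Qed.

Lemma lsigma_conj (a b : int) Q A : supp_ge a Q -> supp_ge b A -> lsigma A = A ->
  lsigma (lmul (lmul (lsigma Q) A) Q) = lmul (lmul (lsigma Q) A) Q.
Proof.
move=> Qa Ab sA; have sQa := supp_ge_lsigma Qa.
rewrite (lsigma_lmul (supp_ge_lmul sQa Ab) Qa) (lsigma_lmul sQa Ab) sA lsigmaK.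
by rewrite (lmulA sQa Ab Qa).
Qed.

(* X(1/z); it exchanges the roles of g_+ and g_-. *)
Definition lrev X : loop R n := fun j => X (- j).

Lemma lrevK X : lrev (lrev X) = X.
Proof. by apply: funext => j; rewrite /lrev opprK. Qed.

Lemma lmul_lrev X Y : lmul (lrev X) (lrev Y) = lrev (lmul X Y).
Proof.
apply: funext => k; rewrite /lrev !lmulE -[RHS]lsum_reflect.
by congr lsum; apply: funext => l; congr (_ *m Y _); lia.
Qed.

Lemma lrev_lone : lrev (lone R n) = lone R n.
Proof. by apply: funext => j; rewrite /lrev /lone oppr_eq0. Qed.

Lemma lsigma_lrev X : lsigma (lrev X) = lrev (lsigma X).
Proof. by apply: funext => j; rewrite /lsigma /lrev signzN. Qed.

End LoopAlgebra.

Section Tails.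
Variable R : realType.
Implicit Types (u : int -> R) (t : R).

Definition cubic_decay u t := forall j : int, `|(j%:~R : R)| ^+ 3 * `|u j| <= t.

Lemma cubic_decay_ge0 u t : cubic_decay u t -> 0 <= t.
Proof. by move=> ut; apply: le_trans (ut 0); rewrite mulr_ge0. Qed.

Lemma inv_cube_le_telescope (y : R) : 1 <= y ->
  ((y + 1) ^+ 3)^-1 <= (y ^+ 2)^-1 - ((y + 1) ^+ 2)^-1.
Proof.
move=> y1; have y0 : 0 < y by lra.
set a := y^-1; set b := (y + 1)^-1.
have ay : a * y = 1 by rewrite mulVf // gt_eqF.
have b0 : 0 < b by rewrite invr_gt0; lra.
have ba : b <= a by rewrite lef_pV2 ?posrE //; lra.
have ab : a - b = a * b by rewrite /a /b; field; rewrite !gt_eqF //; lra.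
rewrite -!exprVn -/a -/b; nra.
Qed.

Lemma psumZ_tail u t N M : cubic_decay u t -> (0 < N)%N -> (N <= M)%N ->
  `|psumZ M u - psumZ N u| <= 2 * t * ((N%:R ^+ 2)^-1 - (M%:R ^+ 2)^-1).
Proof.
move=> ut N0; elim: M => [|M IH]; first by rewrite leqn0 => /eqP N_0; rewrite N_0 in N0.
rewrite leq_eqVlt => /orP[/eqP <-|]; first by rewrite !subrr normr0 mulr0.
rewrite ltnS => NM; have {}IH := IH NM; have t0 := cubic_decay_ge0 ut.
have M1 : 1 <= M%:R :> R by rewrite ler1n; lia.
have end_le (j : int) : `|(j%:~R : R)| = M%:R + 1 -> `|u j| <= t * ((M%:R + 1) ^+ 3)^-1.
  have M0 : 0 < M%:R + 1 :> R by lra.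
  by move=> jM; rewrite ler_pdivlMr ?exprn_gt0 // mulrC -jM; exact: ut.
have uR : `|u (M.+1%:Z)| <= t * ((M%:R + 1) ^+ 3)^-1.
  by apply: end_le; rewrite [X in `|X|](_ : _ = M.+1%:R) // ger0_norm // natr1.
have uL : `|u (- M.+1%:Z)| <= t * ((M%:R + 1) ^+ 3)^-1.
  apply: end_le; rewrite mulrNz normrN.
  by rewrite [X in `|X|](_ : _ = M.+1%:R) // ger0_norm // natr1.
have step := ler_wpM2l t0 (inv_cube_le_telescope M1).
have -> : psumZ M.+1 u - psumZ N u = (psumZ M u - psumZ N u) + u (- M.+1%:Z) + u M.+1%:Z.
  by rewrite psumZS; ring.
rewrite -[M.+1%:R]natr1; apply: le_trans (ler_normD _ _) _.
apply: le_trans (lerD (ler_normD _ _) (lexx _)) _; lra.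
Qed.

Lemma sumZ_psumZ_err u t N : cubic_decay u t -> (0 < N)%N ->
  `|sumZ u - psumZ N u| <= 2 * t / N%:R ^+ 2.
Proof.
move=> ut N0; have t0 := cubic_decay_ge0 ut.
have close K M : (0 < K)%N -> (K <= M)%N -> `|psumZ M u - psumZ K u| <= 2 * t / K%:R ^+ 2.
  move=> K0 KM; apply: le_trans (psumZ_tail ut K0 KM) _.
  by rewrite ler_wpM2l ?mulr_ge0 // gerBl invr_ge0 exprn_ge0.
have cv : cvg ((fun M => psumZ M u) @ \oo)%classic.
  apply: cauchy_cvg; apply: cauchy_exP => e e0.
  have [K K_ge] : exists K : nat, 2 * t / e < K.+1%:R.
    exists (Num.Def.archi_bound (2 * t / e)); apply: lt_trans (archi_boundP _) _.
      by rewrite divr_ge0 ?mulr_ge0 // ltW.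
    by rewrite ltr_nat.
  exists (psumZ K.+1 u).
  change (\forall M \near \oo%classic, ball (psumZ K.+1 u) e (psumZ M u)); near=> M.
  rewrite -ball_normE /ball_ /= distrC.
  apply: le_lt_trans (close _ _ _ _) _ => //; first by near: M; exact: nbhs_infty_ge.
  have K1 : 1 <= K.+1%:R :> R by rewrite ler1n.
  rewrite ltr_pdivrMr // in K_ge; rewrite ltr_pdivrMr ?exprn_gt0 //; nra.
rewrite ler_distl; apply/andP; split; [apply: limr_ge|apply: limr_le] => //; near=> M;
  have /andP[lo hi] :
      psumZ N u - 2 * t / N%:R ^+ 2 <= psumZ M u <= psumZ N u + 2 * t / N%:R ^+ 2
    by rewrite -ler_distl; apply: close => //; near: M; exact: nbhs_infty_ge.
- exact: lo.
- exact: hi.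
Unshelve. all: by end_near.
Qed.

End Tails.

Lemma eq0_of_normr_mul_le (R : realType) (d c : R) (N0 : nat) :
  (forall N : nat, (N0 <= N)%N -> (0 < N)%N -> `|d| * N%:R <= c) -> d = 0.
Proof.
move=> dN; apply/eqP; apply: contraT => d_neq0; have d0 : 0 < `|d| by rewrite normr_gt0.
have c0 : 0 <= c.
  by apply: le_trans (dN (maxn N0 1) (leq_maxl _ _) (leq_maxr _ _)); rewrite mulr_ge0.
set B := Num.Def.archi_bound (c / `|d|).
have cB : c < `|d| * B%:R.
  by rewrite -ltr_pdivrMl // mulrC; exact: archi_boundP (divr_ge0 c0 (ltW d0)).
have := dN (maxn N0 1 + B)%N; rewrite natrD => /(_ _ _) dNB.
have : `|d| * (maxn N0 1)%:R + `|d| * B%:R <= c by rewrite -mulrDr dNB //; lia.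
by have := ler0n R (maxn N0 1); nra.
Qed.

Section InverseUniqueness.
Variables (R : realType) (n : nat).
Implicit Types (X Y Z : loop R n).

Definition bounded_loop X := exists C, forall j a b, `|X j a b| <= C.

Lemma mxentry_mul_le (A B : 'M[R]_n) cA cB a b :
  (forall i j, `|A i j| <= cA) -> (forall i j, `|B i j| <= cB) ->
  `|(A *m B) a b| <= n%:R * (cA * cB).
Proof.
move=> AcA BcB; rewrite mxE; apply: le_trans (ler_norm_sum _ _ _) _.
rewrite mulr_natl -[n in _ *+ n]card_ord -sumr_const; apply: ler_sum => i _.
by rewrite normrM ler_pM.
Qed.

Lemma psumZ_entry_le K (U : int -> 'M[R]_n) c a b :
  (forall j, `|U j a b| <= c) -> `|psumZ K U a b| <= (K.*2.+1)%:R * c.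
Proof.
move=> Uc; rewrite /psumZ summxE; apply: le_trans (ler_norm_sum _ _ _) _.
by rewrite mulr_natl -[X in _ *+ X]subn0 -sumr_const_nat; apply: ler_sum.
Qed.

Definition ltrunc (N : nat) X : loop R n := fun j => if (absz j <= N)%N then X j else 0.

Lemma supp_ge_ltrunc N X : supp_ge (- N%:Z) (ltrunc N X).
Proof. by move=> j jN; rewrite /ltrunc ifF //; lia. Qed.

Lemma lmul_ltrunc_err X Y C CY N c a b :
  (forall (j : int) a b, `|(j%:~R : R)| ^+ 3 * `|X j a b| <= C) ->
  (forall j a b, `|Y j a b| <= CY) -> (0 < N)%N ->
  `|(lmul X Y c - lmul (ltrunc N X) Y c) a b| <= 2 * (n%:R * (C * CY)) / N%:R ^+ 2.
Proof.
move=> XC YC N0; rewrite [lmul (ltrunc N X) Y c](@lsumE _ _ N); last first.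
  by move=> l lN; rewrite /ltrunc leqNgt lN mul0mx.
have -> : psumZ N (fun l => ltrunc N X l *m Y (c - l)) =
          psumZ N (fun l => X l *m Y (c - l)).
  by apply: eq_big_nat => i /andP[_ iN]; rewrite /ltrunc ifT //; lia.
rewrite !mxE /psumZ summxE; apply: sumZ_psumZ_err N0 => l.
have -> : `|(l%:~R : R)| ^+ 3 * `|(X l *m Y (c - l)) a b| =
          `|((l%:~R ^+ 3 *: X l) *m Y (c - l)) a b|.
  by rewrite -scalemxAl [in RHS]mxE -normrX -normrM.
apply: mxentry_mul_le => i j; last exact: YC.
by rewrite mxE normrM normrX.
Qed.

Lemma lmul_ltrunc_defect X Y Z N k : supp_ge 0 Y -> supp_ge 0 Z ->
  lmul Y Z = lone R n -> (absz k <= N)%N ->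
  Z k - X k =
  psumZ (N + absz k) (fun c => (lone R n c - lmul (ltrunc N X) Y c) *m Z (k - c)).
Proof.
move=> Y0 Z0 YZ kN.
have XN : supp_ge (- N%:Z) (ltrunc N X) by exact: supp_ge_ltrunc.
have YXN := supp_ge_lmul XN Y0.
have -> : X k = lmul (lmul (ltrunc N X) Y) Z k.
  by rewrite (lmulA XN Y0 Z0) YZ lmul1r /ltrunc ifT.
rewrite -{1}[Z]lmul1l !lmulE lsumB;
  [|exact (fin_supp_conv k (supp_ge_lone R n) Z0)|exact (fin_supp_conv k YXN Z0)].
rewrite (@lsumE _ _ (N + absz k)) => [|c ck].
  by congr psumZ; apply: funext => c; rewrite mulmxBl.
have [cN|cN] := ltP c (- N%:Z); last by rewrite Z0 ?mulmx0 ?subr0 //; lia.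
by rewrite (supp_ge_lone R n) ?YXN ?mul0mx ?subr0 //; lia.
Qed.

(* Truncating X to the modes |j| <= N makes every product finite, so X^N = (X^N Y) Z
   and Z - X^N = (1 - X^N Y) Z.  By the cubic decay of X the coefficients of
   1 - X^N Y = X Y - X^N Y are O(1/N^2), and only O(N) of them enter a given
   coefficient of (1 - X^N Y) Z. *)
Lemma lmul_inv_unique X Y Z : smooth_loop X -> bounded_loop Y -> bounded_loop Z ->
  supp_ge 0 Y -> supp_ge 0 Z -> lmul X Y = lone R n -> lmul Y Z = lone R n -> X = Z.
Proof.
move=> smX [CY YC] [CZ ZC] Y0 Z0 XY YZ; have [C XC] := smX 3%N.
apply: funext => k; apply/matrixP => a b; apply/eqP; rewrite -subr_eq0; apply/eqP.
set t := n%:R * (C * CY).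
apply: (@eq0_of_normr_mul_le _ _ (5 * n%:R * (2 * t) * CZ) (absz k)) => N kN N0.
have -> : X k a b - Z k a b = - (Z k - X k) a b by rewrite !mxE opprB.
rewrite normrN (lmul_ltrunc_defect X Y0 Z0 YZ kN).
have C0 : 0 <= C by apply: le_trans (XC 0 a b); rewrite mulr_ge0.
have CY0 : 0 <= CY by apply: le_trans (YC 0 a b).
have CZ0 : 0 <= CZ by apply: le_trans (ZC 0 a b).
have t0 : 0 <= t by rewrite !mulr_ge0.
have N_gt0 : (0 : R) < N%:R by rewrite ltr0n.
apply: le_trans (ler_wpM2r (ltW N_gt0)
  (@psumZ_entry_le _ _ (n%:R * (2 * t / N%:R ^+ 2 * CZ)) a b _)) _.
  move=> c; apply: mxentry_mul_le => [i j|]; last exact: ZC.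
  by rewrite -XY; exact: lmul_ltrunc_err.
have le_len : ((N + absz k).*2.+1)%:R <= 5 * N%:R :> R by rewrite -natrM ler_nat; lia.
apply: le_trans (ler_wpM2r (ltW N_gt0) (ler_wpM2r _ le_len)) _.
  by rewrite !mulr_ge0 ?invr_ge0 ?exprn_ge0.
rewrite le_eqVlt; apply/orP; left; apply/eqP; field; exact: lt0r_neq0.
Qed.

End InverseUniqueness.

Section Smoothness.
Variables (R : realType) (n : nat).
Implicit Types (X : loop R n).

Lemma smooth_bounded X : smooth_loop X -> bounded_loop X.
Proof.
move=> smX; have [C XC] := smX 0%N; exists C => j a b.
by have := XC j a b; rewrite expr0 mul1r.
Qed.

Lemma bounded_lsigma X : bounded_loop X -> bounded_loop (lsigma X).
Proof.
by move=> [C XC]; exists C => j a b; rewrite /lsigma !mxE normrM normr_signz mul1r.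
Qed.

Lemma smooth_lrev X : smooth_loop X -> smooth_loop (lrev X).
Proof.
move=> smX k; have [C XC] := smX k; exists C => j a b.
by rewrite /lrev -normrN -mulrNz; exact: XC.
Qed.

Lemma bounded_on_window (f : int -> R) K : exists C, forall j, (absz j <= K)%N -> f j <= C.
Proof.
elim: K => [|K [C fC]]; first by exists (f 0) => j; rewrite leqn0 absz_eq0 => /eqP ->.
exists (Num.max C (Num.max (f K.+1%:Z) (f (- K.+1%:Z)))) => j jK.
have [/fC fjC|Kj] := leqP (absz j) K; first by rewrite !le_max fjC.
have [->|->] : j = K.+1%:Z \/ j = - K.+1%:Z by lia.
  by rewrite !le_max lexx orbT.
by rewrite !le_max lexx !orbT.
Qed.

Lemma smooth_fin_supp X : fin_supp X -> smooth_loop X.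
Proof.
move=> [K XK] k.
pose f j := \big[Num.max/0]_(ab : 'I_n * 'I_n) (`|(j%:~R : R)| ^+ k * `|X j ab.1 ab.2|).
have [C fC] := bounded_on_window f K; exists (Num.max C 0) => j a b.
have [jK|Kj] := leqP (absz j) K; last by rewrite XK // mxE normr0 mulr0 le_max lexx orbT.
rewrite le_max; apply/orP; left; apply: le_trans (fC j jK).
exact: (le_bigmax _ (fun ab : 'I_n * 'I_n => `|(j%:~R : R)| ^+ k * `|X j ab.1 ab.2|)
  (a, b)).
Qed.

End Smoothness.

Lemma gstar_mp_splice (R : realType) (n m p : nat) (B B' : loop R n) :
  supp_ge (- m%:Z) B -> lsigma B = B -> supp_ge (- p%:Z) B' -> lsigma B' = B' ->
  gstar_mp m p (fun k => if k < 0 then B k else lrev B' k).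
Proof.
move=> Bm sB B'p sB'.
have out j : (j < - m%:Z) || (p%:Z < j) -> (if j < 0 then B j else lrev B' j) = 0.
  case/orP=> jout; first by rewrite ifT ?Bm //; lia.
  by rewrite ifF /lrev ?B'p //; lia.
split=> //; split.
  by apply: smooth_fin_supp; exists (m + p)%N => j jmp; apply: out; lia.
move=> j; case: ifP => _; first exact: (proj1 (lsigma_fixedP B) sB).
by rewrite /lrev (proj1 (lsigma_fixedP B') sB') signzN.
Qed.

Unset Implicit Arguments.
Set Strict Implicit.

Theorem proposition3p2 (R : realType) (n m p : nat) (hp : (1 <= p)%N)
  (g gp gpi gm gmi : loop R n) :
  LGSigma_plus gp -> LGSigma_minus gm ->
  is_linv gp gpi -> is_linv gm gmi ->
  g = lmul gp gmi ->
  forall A : loop R n, gstar_mp m p A ->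
  gstar_mp m p (Ad_star gp gpi gm gmi A).
Proof.
move=> [[[smP _] sP] [P0 _]] [[[smM _] sM] [M0 _]] [smPi [_ PiP]] [smMi [_ MiM]] _.
move=> A [[_ /lsigma_fixedP sA] Aout].
have Am : supp_ge (- m%:Z) A by move=> j jm; apply: Aout; rewrite jm.
have rAp : supp_ge (- p%:Z) (lrev A) by move=> j jp; apply: Aout; apply/orP; right; lia.
have rM0 : supp_ge 0 (lrev gm) by move=> j j0; apply: M0; rewrite oppr_gt0.
have ePi : gpi = lsigma gp.
  apply: lmul_inv_unique smPi (smooth_bounded smP) _ P0 (supp_ge_lsigma P0) PiP sP.
  exact: bounded_lsigma (smooth_bounded smP).
have eMi : lrev gmi = lsigma (lrev gm).
  apply: lmul_inv_unique (smooth_lrev smMi) (smooth_bounded (smooth_lrev smM)) _ rM0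
    (supp_ge_lsigma rM0) _ _.
  - exact: bounded_lsigma (smooth_bounded (smooth_lrev smM)).
  - by rewrite lmul_lrev MiM lrev_lone.
  - by rewrite lsigma_lrev lmul_lrev sM lrev_lone.
have eB' : lmul (lmul gmi A) gm = lrev (lmul (lmul (lsigma (lrev gm)) (lrev A)) (lrev gm)).
  by rewrite -eMi !lmul_lrev lrevK.
rewrite /Ad_star eB' ePi; apply: gstar_mp_splice.
- by have := supp_ge_lmul (supp_ge_lmul (supp_ge_lsigma P0) Am) P0; rewrite add0r addr0.
- exact: lsigma_conj P0 Am sA.
- by have := supp_ge_lmul (supp_ge_lmul (supp_ge_lsigma rM0) rAp) rM0; rewrite add0r addr0.
- by apply: lsigma_conj rM0 rAp _; rewrite lsigma_lrev sA.
Qed.
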